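(* Let $K\ge 1$ be an integer, $\alpha\in(0,1)$, $\epsilon>0$, $\delta>0$, and let $n_\mathrm{cal}$ be a positive integer. Set $C(K)=(1+\epsilon)\sum_{j=1}^K \frac{1}{j}$ and, for $j=1,\dots,K$, $a_j=\left\lfloor (n_\mathrm{cal}+1)\frac{\alpha j}{C(K)K}\right\rfloor$, $b_j=(n_\mathrm{cal}+1)-a_j$, $\mu_j=\frac{a_j}{a_j+b_j}$. Suppose $n_\mathrm{cal}$ is such that $$\min_{j=1,\dots,K} I_{(1+\epsilon)\mu_j}(a_j,b_j)\ \ge\ 1-\frac{\delta}{K^2},$$ where $I_x(a,b)$ denotes the regularized incomplete beta function (the CDF at $x$ of a $\mathrm{Beta}(a,b)$ distribution). Let $\{r^i_j : i,j=1,\dots,K\}$ be random variables (with arbitrary joint distribution) such that $r^i_j\sim\mathrm{Beta}(a_j,b_j)$ for each $i,j$. Then $$P\left\{\bigcap_{i=1}^K\bigcap_{j=1}^K\left\{ r^i_j\le (1+\epsilon)\frac{\alpha j}{C(K)K}\right\}\right\}\ \ge\ 1-\delta.$$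
   Context: The quantities $a_j,b_j$ are assumed to be such that the Beta distributions $\mathrm{Beta}(a_j,b_j)$ are well defined (i.e. $a_j\ge 1$, $b_j\ge 1$), as implicit in the hypothesis. *)

From HB Require Import structures.
From mathcomp Require Import all_boot all_order all_algebra.
From mathcomp Require Import all_classical all_reals all_analysis.
Set Implicit Arguments. Unset Strict Implicit. Unset Printing Implicit Defensive.
Import Order.TTheory GRing.Theory Num.Theory.
Local Open Scope classical_set_scope.
Local Open Scope ring_scope.

Definition CK {R : realType} (eps : R) (K : nat) : R :=
  (1 + eps) * \sum_(1 <= j < K.+1) (j%:R)^-1.

Definition thr {R : realType} (alpha eps : R) (K j : nat) : R :=
  alpha * j%:R / (CK eps K * K%:R).

(* a_j = floor((n_cal + 1) * alpha j / (C(K) K)); the argument is >= 0,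
   so the floor is a natural number (Num.truncn = floor on nonnegatives). *)
Definition a_ {R : realType} (alpha eps : R) (K ncal j : nat) : nat :=
  Num.truncn ((ncal.+1)%:R * thr alpha eps K j).

Definition b_ {R : realType} (alpha eps : R) (K ncal j : nat) : nat :=
  ncal.+1 - a_ alpha eps K ncal j.

Definition mu_ {R : realType} (alpha eps : R) (K ncal j : nat) : R :=
  (a_ alpha eps K ncal j)%:R /
  ((a_ alpha eps K ncal j)%:R + (b_ alpha eps K ncal j)%:R).

Definition reg_inc_beta {R : realType} (x : R) (a b : nat) : R :=
  fine (beta_prob (R := R) a b `]-oo, x]).

(* Each r^i_j exceeds (1 + eps) thr_j with probability
   1 - I_{(1+eps) thr_j}(a_j, b_j) <= 1 - I_{(1+eps) mu_j}(a_j, b_j) <= delta / K^2,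
   since mu_j <= thr_j by the floor in a_j and a CDF is monotone. A union bound
   over the K^2 pairs (i, j), which needs no independence, gives the claim. *)

From HB Require Import structures.
From mathcomp Require Import all_boot all_order all_algebra.
From mathcomp Require Import all_classical all_reals all_analysis.
From mathcomp Require Import ring lra.
Set Implicit Arguments. Unset Strict Implicit. Unset Printing Implicit Defensive.
Import Order.TTheory GRing.Theory Num.Theory.
Local Open Scope classical_set_scope.
Local Open Scope ring_scope.

Section probability_bounds.
Context d (T : measurableType d) (R : realType) (P : probability T R).

Lemma probability_ge_setC (A : set T) (x : R) :
  measurable A -> (P (~` A) <= x%:E)%E -> ((1 - x)%:E <= P A)%E.
Proof.
move=> mA; rewrite probability_setC // => hx.
have PA : P A = (fine (P A))%:E by rewrite fineK // fin_num_measure.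
by move: hx; rewrite PA -EFinB !lee_fin => hx; lra.
Qed.

Lemma probability_setC_bigcap_le (A : nat -> set T) (n : nat) (x : R) :
  (forall k, (1 <= k <= n)%N -> measurable (A k)) ->
  (forall k, (1 <= k <= n)%N -> (P (~` A k) <= x%:E)%E) ->
  (P (~` \bigcap_(k in [set k | (1 <= k <= n)%N]) A k) <= (n%:R * x)%:E)%E.
Proof.
move=> mA hA.
have mAS k : (k < n)%N -> measurable (~` A k.+1) by move=> kn; exact/measurableC/mA.
have cover : (~` \bigcap_(k in [set k | (1 <= k <= n)%N]) A k)
    `<=` \big[setU/set0]_(k < n) ~` A k.+1.
  rewrite -(bigcup_mkord n (fun k => ~` A k.+1)) setC_bigcap => w [k /andP[k1 kn] nAw].
  by exists k.-1; rewrite /= ?prednK.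
apply: (le_trans (le_measure _ _ _ cover)); rewrite ?inE.
- apply/measurableC/bigcap_measurableType => k; exact: mA.
- by apply: bigsetU_measurable => k _; exact: mAS.
apply: (le_trans (Boole_inequality _ mAS)).
apply: (le_trans (y := \sum_(k < n) x%:E)%E).
  by apply: lee_sum => k _; apply: hA; rewrite /= ltn_ord.
by rewrite sumEFin sumr_const card_ord mulr_natl.
Qed.

Lemma measurable_rv_le (X : {RV P >-> R}) (c : R) :
  measurable [set w | X w <= c].
Proof.
rewrite (_ : [set w | _] = X @^-1` `]-oo, c]); last first.
  by apply/seteqP; split => w /=; rewrite in_itv.
exact: measurable_funPTI.
Qed.

Lemma rv_tail_le (X : {RV P >-> R})
    (Q : {measure set (measurableTypeR R) -> \bar R}) (m c : R) :
  (forall A, measurable A -> distribution P X A = Q A) -> m <= c ->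
  (P (~` [set w | (X w <= c)%R]) <= 1 - Q `]-oo, m]%classic)%E.
Proof.
move=> lawX mc; rewrite probability_setC; last exact: measurable_rv_le.
have -> : P [set w | (X w <= c)%R] = Q `]-oo, c]%classic by rewrite -lawX.
apply: leeB => //; apply: le_measure; rewrite ?inE //.
by move=> x /=; rewrite !in_itv /= => /le_trans; apply.
Qed.

End probability_bounds.

Lemma CK_ge0 (R : realType) (eps : R) (K : nat) : 0 <= eps -> 0 <= CK eps K.
Proof.
move=> e0; apply: mulr_ge0; first lra.
by apply: sumr_ge0 => j _; rewrite invr_ge0.
Qed.

Lemma thr_ge0 (R : realType) (alpha eps : R) (K j : nat) :
  0 <= alpha -> 0 <= eps -> 0 <= thr alpha eps K j.
Proof.
move=> a0 e0; apply: divr_ge0; first exact: mulr_ge0.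
by apply: mulr_ge0 => //; exact: CK_ge0.
Qed.

Lemma mu_le_thr (R : realType) (alpha eps : R) (K ncal j : nat) :
  0 <= thr alpha eps K j -> (1 <= b_ alpha eps K ncal j)%N ->
  mu_ alpha eps K ncal j <= thr alpha eps K j.
Proof.
(* [1 <= b_j] rules out the truncated subtraction in [b_j], so [a_j + b_j = ncal + 1]. *)
rewrite /mu_ /b_; set a := a_ _ _ _ _ _ => thr0 b1.
rewrite -natrD subnKC; last by rewrite ltnW // -subn_gt0.
rewrite ler_pdivrMr ?ltr0n // mulrC truncn_le mulr_ge0 //.
Qed.

Theorem lemma1 (R : realType) (d : measure_display) (T : measurableType d)
  (P : probability T R) (K : nat) (alpha eps delta : R) (ncal : nat)
  (r : nat -> nat -> {RV P >-> R}) :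
  (1 <= K)%N -> 0 < alpha < 1 -> 0 < eps -> 0 < delta -> (0 < ncal)%N ->
  (* Beta(a_j, b_j) well defined *)
  (forall j, (1 <= j <= K)%N ->
     (1 <= a_ alpha eps K ncal j)%N /\ (1 <= b_ alpha eps K ncal j)%N) ->
  (* min_j I_{(1+eps) mu_j}(a_j, b_j) >= 1 - delta / K^2 *)
  (forall j, (1 <= j <= K)%N ->
     1 - delta / (K%:R ^+ 2) <=
     reg_inc_beta ((1 + eps) * mu_ alpha eps K ncal j)
                  (a_ alpha eps K ncal j) (b_ alpha eps K ncal j)) ->
  (* r^i_j ~ Beta(a_j, b_j) *)
  (forall i j, (1 <= i <= K)%N -> (1 <= j <= K)%N ->
     forall A : set R, measurable A ->
       distribution P (r i j) A =
       beta_prob (a_ alpha eps K ncal j) (b_ alpha eps K ncal j) A) ->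
  ((1 - delta)%:E <=
   P (\bigcap_(i in [set i | (1 <= i <= K)%N])
        \bigcap_(j in [set j | (1 <= j <= K)%N])
          [set w | (r i j w <= (1 + eps) * thr alpha eps K j)%R]))%E.
Proof.
move=> K1 /andP[a0 _] e0 _ _ hab hI law.
set x := delta / K%:R ^+ 2.
set E := fun i j => [set w | (r i j w <= (1 + eps) * thr alpha eps K j)%R].
have mE i j : measurable (E i j) by exact: measurable_rv_le.
have tailE i j : (1 <= i <= K)%N -> (1 <= j <= K)%N -> (P (~` E i j) <= x%:E)%E.
  move=> hi hj; apply: (le_trans (rv_tail_le (law i j hi hj) _)).
    apply: ler_wpM2l; first lra.
    exact: mu_le_thr (thr_ge0 K j (ltW a0) (ltW e0)) (hab j hj).2.
  have := hI j hj; rewrite /reg_inc_beta => cdf_ge.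
  rewrite -[X in (_ - X)%E]fineK ?fin_num_measure // -EFinB lee_fin.
  by rewrite lerBlDr -lerBlDl.
have rowE i : (1 <= i <= K)%N ->
    (P (~` \bigcap_(j in [set j | (1 <= j <= K)%N]) E i j) <= (K%:R * x)%:E)%E.
  by move=> hi; apply: probability_setC_bigcap_le => j hj; [exact: mE|exact: tailE].
have -> : (1 - delta = 1 - K%:R * (K%:R * x))%R.
  by rewrite /x; field; rewrite pnatr_eq0 -lt0n.
have mrow i : measurable (\bigcap_(j in [set j | (1 <= j <= K)%N]) E i j).
  by apply: bigcap_measurableType => j _; exact: mE.
apply: probability_ge_setC.
  by apply: bigcap_measurableType => i _; exact: mrow.
by apply: probability_setC_bigcap_le => i hi; [exact: mrow|exact: rowE].
Qed.
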